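(* Let $\mathbb P$ be an atomless probability measure and $Y_1\le Y_2$ nonnegative random variables with $\mathbb E^{\mathbb P}(Y_1)<1<\mathbb E^{\mathbb P}(Y_2)<\infty$. Let $\overline{\mathbb Q}(A)=\sup_{\mathbb Q\in\mathcal P(\mathbb P,Y_1,Y_2)}\mathbb Q(A)$. For $A\in\mathcal F$: if $\mathbb E^{\mathbb P}(Y_2\mathds 1_A+Y_1\mathds 1_{A^c})\le1$, then $\overline{\mathbb Q}(A)=\mathbb E^{\mathbb P}(Y_2\mathds 1_A)$; if $\mathbb E^{\mathbb P}(Y_2\mathds 1_A+Y_1\mathds 1_{A^c})>1$, then $\overline{\mathbb Q}(A)=\mathbb E^{\mathbb P}(Y_2\mathds 1_B+Y_1\mathds 1_{A\setminus B})$ for any measurable $B\subseteq A$ with $\mathbb E^{\mathbb P}(Y_2\mathds 1_B+Y_1\mathds 1_{B^c})=1$ (such $B$ exist).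
   Context: $\mathcal P(\mathbb P,Y_1,Y_2)=\{\mathbb Q \text{ probability on }(\Omega,\mathcal F):\mathbb Q\ll\mathbb P,\ Y_1\le \mathrm d\mathbb Q/\mathrm d\mathbb P\le Y_2\ \mathbb P\text{-a.s.}\}$. *)

From HB Require Import structures.
From mathcomp Require Import all_boot all_order all_algebra.
From mathcomp Require Import all_classical all_reals all_analysis.
Set Implicit Arguments. Unset Strict Implicit. Unset Printing Implicit Defensive.
Import Order.TTheory GRing.Theory Num.Theory.
Local Open Scope classical_set_scope.
Local Open Scope ring_scope.
Local Open Scope ereal_scope.

Definition atomless (d : measure_display) (T : measurableType d) (R : realType)
  (P : probability T R) : Prop :=
  forall A : set T, measurable A -> 0 < P A ->
    exists B : set T, [/\ measurable B, B `<=` A, 0 < P B & P B < P A].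

Definition density_between (d : measure_display) (T : measurableType d)
  (R : realType) (P Q : probability T R) (Y1 Y2 : T -> R) : Prop :=
  exists f : T -> R,
    [/\ measurable_fun setT f,
        (forall x, (0 <= f x)%R),
        (forall A, measurable A -> Q A = \int[P]_(x in A) (f x)%:E)
      & {ae P, forall x, (Y1 x <= f x)%R /\ (f x <= Y2 x)%R}].

Definition PQset (d : measure_display) (T : measurableType d) (R : realType)
  (P : probability T R) (Y1 Y2 : T -> R) : set (probability T R) :=
  [set Q : probability T R | (Q : set T -> \bar R) `<< P /\ density_between P Q Y1 Y2].

Definition Qbar (d : measure_display) (T : measurableType d) (R : realType)
  (P : probability T R) (Y1 Y2 : T -> R) (A : set T) : \bar R :=
  ereal_sup [set Q A | Q in PQset P Y1 Y2].

From HB Require Import structures.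
From mathcomp Require Import all_boot all_order all_algebra.
From mathcomp Require Import all_classical all_reals all_analysis.
From mathcomp Require Import measurable_realfun lra ring.
Set Implicit Arguments. Unset Strict Implicit. Unset Printing Implicit Defensive.
Import Order.TTheory GRing.Theory Num.Theory.
Local Open Scope classical_set_scope.
Local Open Scope ring_scope.
Local Open Scope ereal_scope.

(* The value Q(A) is largest when the density dQ/dP is pushed up to Y2 on A
   and down to Y1 off A.  If this extremal density Y2 1_A + Y1 1_(A^c) has
   total mass at most 1, every admissible density is at most Y2 on A, and the
   bound E(Y2 1_A) is attained by also raising the density from Y1 to Y2 on a
   part of A^c that carries the missing mass.  Otherwise
   Q(A) = 1 - Q(A^c) <= 1 - E(Y1 1_(A^c)), and this bound is attained by the
   extremal density of a set B included in A with total mass exactly 1.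
   Both constructions rest on E(Y2 1_S + Y1 1_(S^c)) = E(Y1) + nu(S), where
   nu is the measure with density Y2 - Y1 with respect to P: nu is finite and,
   like P, atomless, hence takes every value between 0 and nu(U) on subsets
   of any U (Sierpinski's theorem). *)

Section indicator.
Context (T : Type) (R : pzRingType).
Implicit Types A B : set T.
Local Open Scope ring_scope.

Lemma indic_ge0 (F : numDomainType) A x : 0 <= \1_A x :> F.
Proof. by rewrite indicE ler0n. Qed.

Lemma indic_setC A x : \1_(~` A) x = 1 - \1_A x :> R.
Proof. by rewrite !indicE in_setC; case: (x \in A); rewrite ?subrr ?subr0. Qed.

Lemma indic_setU_disj A B x : A `&` B = set0 ->
  \1_(A `|` B) x = \1_A x + \1_B x :> R.
Proof.
move=> AB0; rewrite !indicE in_setU.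
have [xA|_] := boolP (x \in A); last by rewrite add0r.
have [xB|_] := boolP (x \in B); last by rewrite addr0.
have : (A `&` B) x by split; exact/set_mem.
by rewrite AB0.
Qed.

Lemma indic_mul_sub A B x : B `<=` A -> \1_B x * \1_A x = \1_B x :> R.
Proof.
move=> BA; rewrite !indicE; have [xB|] := boolP (x \in B); last by rewrite mul0r.
by rewrite (mem_set (BA x (set_mem xB))) mulr1.
Qed.

Lemma indic_setD_sub A B x : B `<=` A -> \1_(A `\` B) x = \1_A x - \1_B x :> R.
Proof.
move=> BA; rewrite !indicE in_setD; have [xB|_] := boolP (x \in B).
  by rewrite (mem_set (BA x (set_mem xB))) subrr.
by rewrite andbT subr0.
Qed.

End indicator.

Section nonneg_integral.
Context d (T : measurableType d) (R : realType) (mu : {measure set T -> \bar R}).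
Implicit Types h : T -> R.

Lemma integral_set_indic A h :
  \int[mu]_(x in A) (h x)%:E = \int[mu]_x (h x * \1_A x)%:E.
Proof.
rewrite integral_mkcond; apply: eq_integral => x _.
by rewrite /patch indicE; case: (x \in A); rewrite ?mulr1 ?mulr0.
Qed.

Lemma ge0_integralD_EFin h1 h2 :
  measurable_fun setT h1 -> measurable_fun setT h2 ->
  (forall x, 0 <= h1 x)%R -> (forall x, 0 <= h2 x)%R ->
  \int[mu]_x (h1 x + h2 x)%:E = \int[mu]_x (h1 x)%:E + \int[mu]_x (h2 x)%:E.
Proof.
move=> mh1 mh2 h1_ge0 h2_ge0; under eq_integral do rewrite EFinD.
by apply: ge0_integralD => // [x _||x _|]; rewrite ?lee_fin //; exact/measurable_EFinP.
Qed.

Lemma ae_ge0_le_integral_EFin h1 h2 :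
  measurable_fun setT h1 -> measurable_fun setT h2 ->
  (forall x, 0 <= h1 x)%R -> (forall x, 0 <= h2 x)%R ->
  {ae mu, forall x, h1 x <= h2 x}%R ->
  \int[mu]_x (h1 x)%:E <= \int[mu]_x (h2 x)%:E.
Proof.
move=> mh1 mh2 h1_ge0 h2_ge0 h12.
apply: ae_ge0_le_integral => // [x _||x _||]; rewrite ?lee_fin //.
- exact/measurable_EFinP.
- exact/measurable_EFinP.
- by apply: filterS h12 => x h12x _; rewrite lee_fin.
Qed.

Lemma ge0_integral_fin_num_le h g :
  measurable_fun setT h -> measurable_fun setT g ->
  (forall x, 0 <= h x <= g x)%R -> \int[mu]_x (g x)%:E < +oo ->
  \int[mu]_x (h x)%:E \is a fin_num.
Proof.
move=> mh mg hg g_fin; rewrite ge0_fin_numE; last first.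
  by apply: integral_ge0 => x _; have /andP[] := hg x; rewrite lee_fin.
apply: le_lt_trans g_fin; apply: ae_ge0_le_integral_EFin => //.
- by move=> x; have /andP[] := hg x.
- by move=> x; have /andP[h_ge0 /(le_trans h_ge0)] := hg x.
- by apply: aeW => x; have /andP[] := hg x.
Qed.

End nonneg_integral.

Section density_measure.
Context d (T : measurableType d) (R : realType) (mu : {measure set T -> \bar R}).
Variable f : T -> R.

Definition density_measure of measurable_fun setT f & (forall x, 0 <= f x)%R :
  set T -> \bar R := fun A => \int[mu]_(x in A) (f x)%:E.

Variables (mf : measurable_fun setT f) (f_ge0 : forall x, (0 <= f x)%R).

Let density_measure0 : density_measure mf f_ge0 set0 = 0.
Proof. exact: integral_set0. Qed.

Let density_measure_ge0 A : 0 <= density_measure mf f_ge0 A.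
Proof. by apply: integral_ge0 => x _; rewrite lee_fin. Qed.

Let density_measure_sigma_additive : semi_sigma_additive (density_measure mf f_ge0).
Proof. by apply: semi_sigma_additive_nng_induced => //; exact/measurable_EFinP. Qed.

HB.instance Definition _ := isMeasure.Build _ _ _ (density_measure mf f_ge0)
  density_measure0 density_measure_ge0 density_measure_sigma_additive.

Definition density_probability of \int[mu]_x (f x)%:E = 1 :=
  density_measure mf f_ge0.

Variable f1 : \int[mu]_x (f x)%:E = 1.

HB.instance Definition _ :=
  Measure.copy (density_probability f1) (density_measure mf f_ge0).
HB.instance Definition _ :=
  Measure_isProbability.Build _ _ _ (density_probability f1) f1.

End density_measure.

Definition nonatomic d (T : measurableType d) (R : realType)
    (nu : set T -> \bar R) : Prop :=
  forall A, measurable A -> 0 < nu A ->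
    exists B, [/\ measurable B, B `<=` A, 0 < nu B & nu B < nu A].

Section nonatomic_density_measure.
Context d (T : measurableType d) (R : realType) (mu : {measure set T -> \bar R}).
Variables (g : T -> R) (mg : measurable_fun setT g) (g_ge0 : forall x, (0 <= g x)%R).
Local Notation nu := (density_measure mu mg g_ge0).

Lemma density_measure_gt0 D : measurable D -> (forall x, D x -> 0 < g x)%R ->
  0 < mu D -> 0 < nu D.
Proof.
move=> mD Dg mu_D; rewrite lt0e measure_ge0 andbT; apply/negP => /eqP nuD0.
have : \int[mu]_(x in D) `|(EFin \o g) x| = 0.
  by rewrite -nuD0; apply: eq_integral => x _ /=; rewrite ger0_norm.
move/(ae_eq_integral_abs _ mD) => [|N [mN muN0 DN]].
  by apply: measurable_funTS; exact/measurable_EFinP.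
have : mu D <= mu N.
  apply: le_measure; rewrite ?inE // => x Dx; apply: DN => /= /(_ Dx) gx0.
  by have := Dg x Dx; rewrite -lte_fin gx0 ltxx.
by rewrite muN0 leNgt mu_D.
Qed.

(* Split the part of A where g > 0 into two pieces of positive mu-measure;
   each of them then has positive nu-measure. *)
Lemma nonatomic_density_measure : nu setT < +oo -> nonatomic mu -> nonatomic nu.
Proof.
move=> nu_fin mu_nonatomic A mA nuA_gt0.
pose Ag := A `&` [set x | 0 < (EFin \o g) x].
have mgA : measurable_fun A (EFin \o g).
  by apply: measurable_funTS; exact/measurable_EFinP.
have mAg : measurable Ag by exact: emeasurable_fun_o_infty.
have AgA : Ag `<=` A by move=> x [].
have muAg_gt0 : 0 < mu Ag.
  rewrite lt0e measure_ge0 andbT; apply/negP => /eqP muAg0.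
  have : nu A <= \int[mu]_(x in A) (cst 0 x).
    apply: ae_ge0_le_integral => //; first by move=> x _; rewrite lee_fin.
    exists Ag; split => // x /= /not_implyP [Ax /negP].
    by rewrite -ltNge => gx; split.
  by rewrite integral0 leNgt nuA_gt0.
have [B [mB BAg muB_gt0 muB_lt]] := mu_nonatomic Ag mAg muAg_gt0.
have mAgB : measurable (Ag `\` B) by exact: measurableD.
have muAgB_gt0 : 0 < mu (Ag `\` B).
  rewrite lt0e measure_ge0 andbT; apply/negP => /eqP muAgB0.
  have : mu Ag = mu B + mu (Ag `\` B) by rewrite -measureU ?setDUK // setDIK.
  by rewrite muAgB0 adde0 => muAgE; move: muB_lt; rewrite muAgE ltxx.
have nuB_gt0 : 0 < nu B by apply: density_measure_gt0 => // x /BAg [_ /=].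
have nuAgB_gt0 : 0 < nu (Ag `\` B) by apply: density_measure_gt0 => // x [[_ /=]].
have nuB_fin : nu B \is a fin_num.
  rewrite ge0_fin_numE ?measure_ge0 //; apply: le_lt_trans nu_fin.
  by apply: le_measure; rewrite ?inE.
exists B; split => //; first exact: subset_trans AgA.
apply: (@lt_le_trans _ _ (nu Ag)); last by apply: le_measure; rewrite ?inE.
by rewrite -(setDUK BAg) measureU ?setDIK // lteDl.
Qed.

End nonatomic_density_measure.

Section nonatomic_intermediate_value.
Context d (T : measurableType d) (R : realType) (nu : {measure set T -> \bar R}).
Hypotheses (nu_fin : nu setT < +oo) (nu_nonatomic : nonatomic nu).

Let m A := fine (nu A).

Let nu_fin_num A : measurable A -> nu A \is a fin_num.
Proof.
move=> mA; rewrite ge0_fin_numE //; apply: le_lt_trans nu_fin.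
by apply: le_measure; rewrite ?inE.
Qed.

Let nuE A : measurable A -> nu A = (m A)%:E.
Proof. by move=> mA; rewrite /m fineK // nu_fin_num. Qed.

Let m_ge0 A : (0 <= m A)%R. Proof. exact: fine_ge0. Qed.

Let m0 : m set0 = 0%R. Proof. by rewrite /m measure0. Qed.

Let m_setU A B : measurable A -> measurable B -> A `&` B = set0 ->
  m (A `|` B) = (m A + m B)%R.
Proof. by move=> mA mB AB0; rewrite /m measureU // fineD // nu_fin_num. Qed.

Let m_le A B : measurable A -> measurable B -> A `<=` B -> (m A <= m B)%R.
Proof.
by move=> mA mB AB; rewrite -lee_fin -!nuE //; apply: le_measure; rewrite ?inE.
Qed.

Let m_setD A B : measurable A -> measurable B -> B `<=` A ->
  m (A `\` B) = (m A - m B)%R.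
Proof.
move=> mA mB BA; have := m_setU mB (measurableD mA mB) (setDIK B A).
by rewrite setDUK // => ->; lra.
Qed.

Lemma nonatomic_halving C n : measurable C -> (0 < m C)%R ->
  exists D, [/\ measurable D, D `<=` C, (0 < m D)%R & (m D * 2 ^+ n <= m C)%R].
Proof.
move=> mC mC_gt0; elim: n => [|n [D [mD DC mD_gt0 mDn]]].
  by exists C; split => //; rewrite expr0 mulr1.
have [|D1 [mD1 D1D nuD1_gt0 nuD1_lt]] := nu_nonatomic mD; first by rewrite nuE.
move: nuD1_gt0 nuD1_lt; rewrite !nuE // !lte_fin => mD1_gt0 mD1_lt.
have pow_ge0 : (0 <= (2 : R) ^+ n)%R by apply: exprn_ge0.
rewrite exprS; have [small_D1|big_D1] := leP (m D1 * 2)%R (m D).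
  by exists D1; split => //; [exact: subset_trans DC|nra].
exists (D `\` D1); split; first exact: measurableD.
- by move=> x [/DC].
- by rewrite m_setD //; lra.
- by rewrite m_setD //; nra.
Qed.

Lemma nonatomic_small C (eps : R) : measurable C -> (0 < m C)%R -> (0 < eps)%R ->
  exists D, [/\ measurable D, D `<=` C, (0 < m D)%R & (m D < eps)%R].
Proof.
move=> mC mC_gt0 eps_gt0.
pose n := Num.bound (m C / eps).
have mC_lt : (m C < n%:R * eps)%R.
  by rewrite -ltr_pdivrMr // archi_boundP // divr_ge0 // ltW.
have n_le : (n%:R <= (2 : R) ^+ n)%R by rewrite -natrX ler_nat ltnW // ltn_expl.
have [D [mD DC mD_gt0 mDn]] := nonatomic_halving n mC mC_gt0.
exists D; split => //; rewrite ltNge; apply/negP => eps_le.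
have : (eps * 2 ^+ n <= m D * 2 ^+ n)%R by rewrite ler_wpM2r // exprn_ge0.
have : (n%:R * eps <= eps * 2 ^+ n)%R by rewrite mulrC ler_wpM2l // ltW.
lra.
Qed.

Section greedy.
Variables (A : set T) (c : R).
Hypothesis c_ge0 : (0 <= c)%R.

Let admissible B D := [/\ measurable D, D `<=` A `\` B & (m B + m D <= c)%R].

Let greedy_step B : measurable B -> (m B <= c)%R -> exists D,
  admissible B D /\ forall D', admissible B D' -> (m D' <= 2 * m D)%R.
Proof.
move=> mB mB_le.
pose S := [set m D | D in admissible B].
have adm0 : admissible B set0 by split; rewrite ?m0 ?addr0.
have supS : has_sup S.
  split; first by exists (m set0), set0.
  by exists c => _ [D [_ _ BD_le] <-]; have := m_ge0 B; lra.
have le_sup D : admissible B D -> (m D <= sup S)%R.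
  by move=> admD; apply: sup_upper_bound => //; exists D.
have [sup_gt0|sup_le0] := ltP 0%R (sup S).
  have [_ [D admD <-] supD] := @sup_adherent _ S (sup S / 2) ltac:(lra) supS.
  by exists D; split => // D' /le_sup; lra.
by exists set0; split => // D' /le_sup; rewrite m0; lra.
Qed.

Lemma greedy_sequence : exists B : (set T)^nat,
  [/\ forall n, [/\ measurable (B n), B n `<=` A & (m (B n) <= c)%R],
      nondecreasing_seq B &
      forall n D, admissible (B n) D -> (m D <= 2 * (m (B n.+1) - m (B n)))%R].
Proof.
have /choice [next next_spec] : forall B, exists D,
    measurable B /\ (m B <= c)%R ->
    admissible B D /\ forall D', admissible B D' -> (m D' <= 2 * m D)%R.
  move=> B; have [[mB mB_le]|] := pselect (measurable B /\ (m B <= c)%R).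
    by have [D ?] := greedy_step mB mB_le; exists D.
  by exists set0.
pose B := fix B n := if n is k.+1 then B k `|` next (B k) else set0.
have B_inv n : [/\ measurable (B n), B n `<=` A & (m (B n) <= c)%R].
  elim: n => [|n [mBn BnA mBn_le]]; first by split => //=; rewrite m0.
  have [[mnext nextA next_le] _] := next_spec (B n) (conj mBn mBn_le).
  have disj : B n `&` next (B n) = set0.
    by rewrite setIC; apply/disjoints_subset => x /nextA [].
  split => /=; first exact: measurableU.
  - by move=> x [/BnA|/nextA []].
  - by rewrite m_setU.
exists B; split => //.
  by apply/nondecreasing_seqP => n; apply/subsetPset => x /= Bx; left.
move=> n D admD; have [mBn _ mBn_le] := B_inv n.
have [[mnext nextA _] next_max] := next_spec (B n) (conj mBn mBn_le).
have disj : B n `&` next (B n) = set0.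
  by rewrite setIC; apply/disjoints_subset => x /nextA [].
by rewrite /= m_setU // addrAC subrr add0r; exact: next_max.
Qed.

End greedy.

Lemma nonatomic_intermediate_value A c : measurable A -> (0 <= c)%R ->
  c%:E <= nu A -> exists B, [/\ measurable B, B `<=` A & nu B = c%:E].
Proof.
move=> mA c_ge0 c_le; have mA_ge : (c <= m A)%R by rewrite -lee_fin -nuE.
have [B [B_inv B_nd B_step]] := greedy_sequence A c_ge0.
have mB n : measurable (B n) by have [] := B_inv n.
pose Binf := \bigcup_n B n.
have mBinf : measurable Binf by exact: bigcupT_measurable.
have BinfA : Binf `<=` A by move=> x [n _]; have [_ + _] := B_inv n; exact.
have mBinf_le : (m Binf <= c)%R.
  have B_cvg := @nondecreasing_cvg_mu _ _ _ nu B mB mBinf B_nd.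
  rewrite -lee_fin -nuE // -(cvg_lim _ B_cvg) //; apply: lime_le.
    exact: cvgP B_cvg.
  by apply: nearW => n /=; have [_ _] := B_inv n; rewrite nuE // lee_fin.
exists Binf; split => //; rewrite nuE //; congr EFin.
apply/eqP; rewrite eq_le mBinf_le leNgt; apply/negP => mBinf_lt.
have mAB_gt0 : (0 < m (A `\` Binf))%R by rewrite m_setD //; lra.
have [|D [mD DA mD_gt0 mD_lt]] := nonatomic_small (measurableD mA mBinf) mAB_gt0
  (_ : 0 < c - m Binf)%R; first by lra.
have B_grow n : (n%:R * (m D / 2) <= m (B n))%R.
  elim: n => [|n IHn]; first by rewrite mul0r m_ge0.
  have : (m D <= 2 * (m (B n.+1) - m (B n)))%R.
    apply: B_step; split => //.
      by move=> x /DA [Ax Binfx]; split => // Bnx; apply: Binfx; exists n.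
    have : (m (B n) <= m Binf)%R by apply: m_le => //; exact: bigcup_sup.
    lra.
  by rewrite -(natr1 n) mulrDl mul1r; lra.
pose n := Num.bound (c / (m D / 2)).
have : (c < n%:R * (m D / 2))%R.
  by rewrite -ltr_pdivrMr ?divr_gt0 // archi_boundP // divr_ge0 // ltW ?divr_gt0.
by have := B_grow n; have [_ _] := B_inv n; lra.
Qed.

End nonatomic_intermediate_value.

Section upper_probability.
Context d (T : measurableType d) (R : realType) (P : probability T R) (Y1 Y2 : T -> R).
Hypotheses (mY1 : measurable_fun setT Y1) (mY2 : measurable_fun setT Y2).
Hypotheses (Y1_ge0 : forall x, (0 <= Y1 x)%R) (Y1_le_Y2 : forall x, (Y1 x <= Y2 x)%R).

Let Y2_ge0 x : (0 <= Y2 x)%R. Proof. exact: le_trans (Y1_le_Y2 x). Qed.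

Let mYI (Y : T -> R) S : measurable_fun setT Y -> measurable S ->
  measurable_fun setT (fun x => Y x * \1_S x)%R.
Proof. by move=> mY mS; apply: measurable_funM => //; exact: measurable_indic. Qed.

Let YI_ge0 (Y : T -> R) S : (forall x, 0 <= Y x)%R -> forall x, (0 <= Y x * \1_S x)%R.
Proof. by move=> Y_ge0 x; rewrite mulr_ge0 ?indic_ge0. Qed.

Lemma PQset_le Q A : PQset P Y1 Y2 Q -> measurable A ->
  \int[P]_x (Y1 x * \1_A x)%:E <= Q A <= \int[P]_x (Y2 x * \1_A x)%:E.
Proof.
move=> [_ [f [mf f_ge0 QE f_between]]] mA; rewrite QE // (integral_set_indic _ A).
apply/andP; split; (apply: ae_ge0_le_integral_EFin;
  [exact: mYI|exact: mYI|exact: YI_ge0|exact: YI_ge0|]).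
- by apply: filterS f_between => x [Y1f _]; rewrite ler_wpM2r ?indic_ge0.
- by apply: filterS f_between => x [_ fY2]; rewrite ler_wpM2r ?indic_ge0.
Qed.

Lemma PQset_le_compl Q A : PQset P Y1 Y2 Q -> measurable A ->
  Q A <= 1 - \int[P]_x (Y1 x * \1_(~` A) x)%:E.
Proof.
move=> PQ mA; have mAc := measurableC mA.
have /andP[Y1_le _] := PQset_le PQ mAc.
have QA_fin : Q A \is a fin_num.
  by rewrite ge0_fin_numE // (le_lt_trans (probability_le1 Q mA)) ?ltey.
have Y1_fin : \int[P]_x (Y1 x * \1_(~` A) x)%:E \is a fin_num.
  rewrite ge0_fin_numE; last by apply: integral_ge0 => x _; rewrite lee_fin YI_ge0.
  by rewrite (le_lt_trans Y1_le) // (le_lt_trans (probability_le1 Q mAc)) ?ltey.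
rewrite leeBrDl //; apply: le_trans (leeD2r _ Y1_le) _.
by rewrite probability_setC // subeK.
Qed.

Lemma density_le_Qbar f A : measurable_fun setT f ->
  (forall x, Y1 x <= f x <= Y2 x)%R -> \int[P]_x (f x)%:E = 1 -> measurable A ->
  \int[P]_x (f x * \1_A x)%:E <= Qbar P Y1 Y2 A.
Proof.
move=> mf f_between f1 mA.
have f_ge0 x : (0 <= f x)%R by have /andP[/(le_trans (Y1_ge0 x))] := f_between x.
apply: ereal_sup_ubound; exists (density_probability mf f_ge0 f1).
  split.
    move=> N PN0 B mB BN; rewrite /= /density_probability /density_measure.
    rewrite null_set_integral //; last exact: PN0.
    by apply: measurable_funTS; exact/measurable_EFinP.
  exists f; split => //; apply: aeW => x.
  by have /andP[] := f_between x.
by rewrite /= /density_probability /density_measure integral_set_indic.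
Qed.

Definition extremal (S : set T) x := (Y2 x * \1_S x + Y1 x * \1_(~` S) x)%R.

Lemma extremalE S x : extremal S x = (Y1 x + (Y2 x - Y1 x) * \1_S x)%R.
Proof. by rewrite /extremal indic_setC; ring. Qed.

Lemma extremal_set0 x : extremal set0 x = Y1 x.
Proof. by rewrite extremalE indicE in_set0 mulr0 addr0. Qed.

Lemma extremal_setT x : extremal setT x = Y2 x.
Proof. by rewrite extremalE indicE in_setT mulr1 addrC subrK. Qed.

Lemma extremal_between S x : (Y1 x <= extremal S x <= Y2 x)%R.
Proof.
have := Y1_le_Y2 x; rewrite extremalE indicE.
by case: (x \in S); rewrite ?mulr1 ?mulr0 => ?; apply/andP; split; lra.
Qed.

Lemma measurable_extremal S : measurable S -> measurable_fun setT (extremal S).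
Proof. by move=> mS; apply: measurable_funD; apply: mYI => //; exact: measurableC. Qed.

Lemma extremal_setU S C x : S `&` C = set0 ->
  extremal (S `|` C) x = (extremal S x + (Y2 x - Y1 x) * \1_C x)%R.
Proof. by move=> SC0; rewrite !extremalE indic_setU_disj //; ring. Qed.

Lemma extremal_mul_indic_sup S A x : A `<=` S ->
  (extremal S x * \1_A x = Y2 x * \1_A x)%R.
Proof.
by move=> AS; rewrite extremalE mulrDl -mulrA [(\1_S x * _)%R]mulrC indic_mul_sub //; ring.
Qed.

Lemma extremal_mul_indic_sub B A x : B `<=` A ->
  (extremal B x * \1_A x = Y2 x * \1_B x + Y1 x * \1_(A `\` B) x)%R.
Proof.
by move=> BA; rewrite extremalE indic_setD_sub // mulrDl -mulrA indic_mul_sub //; ring.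
Qed.

Lemma extremal_split B A x : B `<=` A -> extremal B x =
  (Y2 x * \1_B x + Y1 x * \1_(A `\` B) x + Y1 x * \1_(~` A) x)%R.
Proof. by move=> BA; rewrite extremalE indic_setD_sub // indic_setC; ring. Qed.


Hypotheses (P_atomless : atomless P) (Y2_fin : \int[P]_x (Y2 x)%:E < +oo).

Let extremal_integral_fin_num S : measurable S ->
  \int[P]_x (extremal S x)%:E \is a fin_num.
Proof.
move=> mS; apply: ge0_integral_fin_num_le (measurable_extremal mS) mY2 _ Y2_fin.
by move=> x; have /andP[/(le_trans (Y1_ge0 x)) -> ->] := extremal_between S x.
Qed.

Let gap x := (Y2 x - Y1 x)%R.
Let mgap : measurable_fun setT gap. Proof. exact: measurable_funB. Qed.
Let gap_ge0 x : (0 <= gap x)%R. Proof. by rewrite subr_ge0. Qed.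
Let nu := density_measure P mgap gap_ge0.

Let nu_fin : nu setT < +oo.
Proof.
apply: le_lt_trans Y2_fin; apply: ae_ge0_le_integral_EFin => //.
by apply: aeW => x; rewrite /gap lerBlDr lerDl.
Qed.

Lemma integral_extremal_setU S C : measurable S -> measurable C -> S `&` C = set0 ->
  \int[P]_x (extremal (S `|` C) x)%:E = \int[P]_x (extremal S x)%:E + nu C.
Proof.
move=> mS mC SC0; under eq_integral do rewrite extremal_setU //.
rewrite (@ge0_integralD_EFin _ _ _ P _ (fun x => gap x * \1_C x)%R).
  by rewrite /nu /density_measure (integral_set_indic _ C).
- exact: measurable_extremal.
- exact: mYI.
- by move=> x; have /andP[/(le_trans (Y1_ge0 x))] := extremal_between S x.
- exact: YI_ge0.
Qed.

Lemma extremal_integral_ivt S U : measurable S -> measurable U -> S `<=` U ->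
  \int[P]_x (extremal S x)%:E <= 1 -> 1 <= \int[P]_x (extremal U x)%:E ->
  exists V, [/\ measurable V, S `<=` V, V `<=` U & \int[P]_x (extremal V x)%:E = 1].
Proof.
move=> mS mU SU ES_le1 EU_ge1.
set a := \int[P]_x (extremal S x)%:E in ES_le1 *.
have mUS : measurable (U `\` S) by exact: measurableD.
have a_fin : a \is a fin_num by exact: extremal_integral_fin_num.
have EUE : \int[P]_x (extremal U x)%:E = a + nu (U `\` S).
  by rewrite -integral_extremal_setU ?setDUK // setDIK.
have gap_fin : 1 - a \is a fin_num by rewrite fin_numB a_fin.
have c_ge0 : (0 <= fine (1 - a))%R by apply: fine_ge0; rewrite subre_ge0.
have c_le : (fine (1 - a))%:E <= nu (U `\` S).
  by rewrite fineK // leeBlDr // addeC -EUE.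
have nu_nonatomic : nonatomic nu := nonatomic_density_measure nu_fin P_atomless.
have [C [mC CUS nuC]] :=
  nonatomic_intermediate_value nu_fin nu_nonatomic mUS c_ge0 c_le.
have {}nuC : nu C = (fine (1 - a))%:E := nuC.
have SC0 : S `&` C = set0.
  by rewrite setIC; apply/disjoints_subset => x /CUS [].
exists (S `|` C); split; first exact: measurableU.
- by move=> x Sx; left.
- by move=> x [/SU|/CUS []].
- by rewrite integral_extremal_setU // nuC fineK // addeC subeK.
Qed.

Lemma PQset_le_extremal Q A B : PQset P Y1 Y2 Q -> measurable A -> measurable B ->
  B `<=` A -> \int[P]_x (extremal B x)%:E = 1 ->
  Q A <= \int[P]_x (Y2 x * \1_B x + Y1 x * \1_(A `\` B) x)%:E.
Proof.
move=> PQ mA mB BA EB1; apply: le_trans (PQset_le_compl PQ mA) _.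
have mAc := measurableC mA.
have Y1Ac_fin : \int[P]_x (Y1 x * \1_(~` A) x)%:E \is a fin_num.
  apply: ge0_integral_fin_num_le (mYI mY1 mAc) mY2 _ Y2_fin => x.
  by rewrite YI_ge0 //= (le_trans _ (Y1_le_Y2 x)) // ler_piMr ?indicE ?lern1 ?leq_b1.
rewrite -EB1; under eq_integral do rewrite (extremal_split _ BA).
rewrite (@ge0_integralD_EFin _ _ _ P
  (fun x => Y2 x * \1_B x + Y1 x * \1_(A `\` B) x)%R) ?addeK //.
- by apply: measurable_funD; apply: mYI => //; exact: measurableD.
- exact: mYI.
- by move=> x; rewrite addr_ge0 ?YI_ge0.
- exact: YI_ge0.
Qed.

End upper_probability.

Unset Implicit Arguments. Set Strict Implicit.

Theorem mainTheorem8 (d : measure_display) (T : measurableType d) (R : realType)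
  (P : probability T R) (Y1 Y2 : T -> R) :
  atomless P ->
  measurable_fun setT Y1 -> measurable_fun setT Y2 ->
  (forall x, (0 <= Y1 x)%R) -> (forall x, (Y1 x <= Y2 x)%R) ->
  \int[P]_x (Y1 x)%:E < 1 -> 1 < \int[P]_x (Y2 x)%:E ->
  \int[P]_x (Y2 x)%:E < +oo ->
  forall A : set T, measurable A ->
    (\int[P]_x (Y2 x * \1_A x + Y1 x * \1_(~` A) x)%:E <= 1 ->
       Qbar P Y1 Y2 A = \int[P]_x (Y2 x * \1_A x)%:E)
 /\ (1 < \int[P]_x (Y2 x * \1_A x + Y1 x * \1_(~` A) x)%:E ->
       (exists B : set T, [/\ measurable B, B `<=` A &
          \int[P]_x (Y2 x * \1_B x + Y1 x * \1_(~` B) x)%:E = 1])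
    /\ (forall B : set T, measurable B -> B `<=` A ->
          \int[P]_x (Y2 x * \1_B x + Y1 x * \1_(~` B) x)%:E = 1 ->
          Qbar P Y1 Y2 A = \int[P]_x (Y2 x * \1_B x + Y1 x * \1_(A `\` B) x)%:E)).
Proof.
move=> P_atomless mY1 mY2 Y1_ge0 Y1_le_Y2 EY1_lt1 EY2_gt1 Y2_fin A mA.
have ivt := extremal_integral_ivt mY1 mY2 Y1_ge0 Y1_le_Y2 P_atomless Y2_fin.
have extremal_le_Qbar S (mS : measurable S) := density_le_Qbar Y1_ge0
  (measurable_extremal mY1 mY2 mS) (extremal_between Y1_le_Y2 S).
split=> [EA_le1|EA_gt1].
  apply/le_anti/andP; split.
    by apply: ge_ereal_sup => _ [Q PQ <-]; have /andP[] := PQset_le mY1 mY2 Y1_ge0 Y1_le_Y2 PQ mA.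
  have [|V [mV AV _ EV1]] := ivt _ _ mA measurableT (subsetT A) EA_le1.
    by under eq_integral do rewrite extremal_setT; exact: ltW.
  under eq_integral do rewrite -(extremal_mul_indic_sup Y1 Y2 _ AV).
  exact: extremal_le_Qbar.
split=> [|B mB BA EB1].
  have [|V [mV _ VA EV1]] := ivt _ _ measurable0 mA (sub0set A) _ (ltW EA_gt1).
    by under eq_integral do rewrite extremal_set0; exact: ltW.
  by exists V.
apply/le_anti/andP; split.
  apply: ge_ereal_sup => _ [Q PQ <-].
  exact: (PQset_le_extremal mY1 mY2 Y1_ge0 Y1_le_Y2 Y2_fin PQ mA mB BA EB1).
under eq_integral do rewrite -(extremal_mul_indic_sub Y1 Y2 _ BA).
exact: extremal_le_Qbar.
Qed.
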